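(* Let $S:\mathbb{R}^m\times\mathbb{R}^n\to\mathbb{R}^q$ be a bilinear map with lifted linear operator $\mathscr{S}:\mathbb{R}^{m\times n}\to\mathbb{R}^q$, let $\mathcal{K}\subseteq\mathbb{R}^m\times\mathbb{R}^n$, and let $\mathcal{K}'\subseteq\mathbb{R}^{m\times n}$ be any set satisfying $\mathcal{K}'\cap\{W\in\mathbb{R}^{m\times n}:\operatorname{rank}(W)\le 1\}=\{xy^T:(x,y)\in\mathcal{K}\}$. Fix $z\in\mathbb{R}^q$ and suppose the problem (P) ''find $(x,y)$ with $S(x,y)=z$ and $(x,y)\in\mathcal{K}$'' is feasible, i.e. has at least one solution. Let $\mathcal{K}_{\mathrm{opt}}$ be the set of solutions of (P), and let $\mathcal{K}'_{\mathrm{opt}}$ be the set of optimal solutions (minimizers) of the problem (Q) ''minimize $\operatorname{rank}(W)$ over $W\in\mathbb{R}^{m\times n}$ subject to $\mathscr{S}(W)=z$ and $W\in\mathcal{K}'$''. Then: (1) Problem (Q) is feasible and its optimal solutions have rank at most one; (2) $\mathcal{K}'_{\mathrm{opt}}\subseteq\{xy^T:(x,y)\in\mathcal{K}_{\mathrm{opt}}\}$; (3) $\mathcal{K}'_{\mathrm{opt}}=\{xy^T:(x,y)\in\mathcal{K}_{\mathrm{opt}}\}$ if and only if it is not the case that $\{0\}\subsetneq\{xy^T:(x,y)\in\mathcal{K}_{\mathrm{opt}}\}$.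
   Context: A map $S:\mathbb{R}^m\times\mathbb{R}^n\to\mathbb{R}^q$ is bilinear if it is linear in each argument when the other is fixed. For $j=1,\dots,q$ let $S_j\in\mathbb{R}^{m\times n}$ be the unique matrix with $(S(x,y))_j=x^TS_jy$ for all $x,y$. The lifted linear operator $\mathscr{S}:\mathbb{R}^{m\times n}\to\mathbb{R}^q$ is defined by $(\mathscr{S}(W))_j=\langle W,S_j\rangle=\operatorname{tr}(S_j^TW)$, so that $\mathscr{S}(xy^T)=S(x,y)$ for all $x,y$. *)

From HB Require Import structures.
From mathcomp Require Import all_boot all_order all_algebra.
From mathcomp Require Import reals.
Set Implicit Arguments. Unset Strict Implicit. Unset Printing Implicit Defensive.
Import Order.TTheory GRing.Theory Num.Theory.
Local Open Scope ring_scope.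

Definition bilinear_map (R : realType) (m n q : nat)
  (S : 'cV[R]_m -> 'cV[R]_n -> 'cV[R]_q) : Prop :=
  (forall (a : R) x1 x2 y, S (a *: x1 + x2) y = a *: S x1 y + S x2 y) /\
  (forall (a : R) x y1 y2, S x (a *: y1 + y2) = a *: S x y1 + S x y2).

(* S_j : the matrix with (S(x,y))_j = x^T S_j y, entries S_j(i,k) = (S(e_i,e_k))_j. *)
Definition Smat (R : realType) (m n q : nat)
  (S : 'cV[R]_m -> 'cV[R]_n -> 'cV[R]_q) (j : 'I_q) : 'M[R]_(m, n) :=
  \matrix_(i < m, k < n) (S (delta_mx i 0) (delta_mx k 0)) j 0.

Definition liftS (R : realType) (m n q : nat)
  (S : 'cV[R]_m -> 'cV[R]_n -> 'cV[R]_q) (W : 'M[R]_(m, n)) : 'cV[R]_q :=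
  \col_(j < q) \tr ((Smat S j)^T *m W).

Definition lift_set (R : realType) (m n : nat)
  (A : 'cV[R]_m -> 'cV[R]_n -> Prop) (W : 'M[R]_(m, n)) : Prop :=
  exists x y, A x y /\ W = x *m y^T.

Definition P_sol (R : realType) (m n q : nat)
  (S : 'cV[R]_m -> 'cV[R]_n -> 'cV[R]_q) (K : 'cV[R]_m -> 'cV[R]_n -> Prop)
  (z : 'cV[R]_q) (x : 'cV[R]_m) (y : 'cV[R]_n) : Prop :=
  S x y = z /\ K x y.

Definition Q_feas (R : realType) (m n q : nat)
  (S : 'cV[R]_m -> 'cV[R]_n -> 'cV[R]_q) (K' : 'M[R]_(m, n) -> Prop)
  (z : 'cV[R]_q) (W : 'M[R]_(m, n)) : Prop :=
  liftS S W = z /\ K' W.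

Definition Q_opt (R : realType) (m n q : nat)
  (S : 'cV[R]_m -> 'cV[R]_n -> 'cV[R]_q) (K' : 'M[R]_(m, n) -> Prop)
  (z : 'cV[R]_q) (W : 'M[R]_(m, n)) : Prop :=
  Q_feas S K' z W /\ (forall W', Q_feas S K' z W' -> (\rank W <= \rank W')%N).

From HB Require Import structures.
From mathcomp Require Import all_boot all_order all_algebra.
From mathcomp Require Import reals.
Import Order.TTheory GRing.Theory Num.Theory.
Local Open Scope ring_scope.

(* Since the lift agrees with S on rank-one matrices and K' meets the rank <= 1
   matrices exactly in the lift of K, the feasible points of (Q) of rank <= 1
   are exactly the lifts x y^T of solutions of (P). A solution of (P) thus gives
   a feasible point of rank <= 1, so optimal points have rank <= 1 and are lifts
   of solutions. Conversely every lift of a solution is optimal unless some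
   feasible point has rank 0, i.e. unless 0 is a lift of a solution while a
   nonzero lift exists. *)

Section Bilinear.
Variables (R : realType) (m n q : nat) (S : 'cV[R]_m -> 'cV[R]_n -> 'cV[R]_q).
Hypothesis bilinS : bilinear_map S.

Lemma bilin0l y : S 0 y = 0.
Proof.
have := (proj1 bilinS) 1 0 0 y; rewrite !scale1r addr0.
by move/(congr1 (fun v => v - S 0 y)); rewrite subrr addrK.
Qed.

Lemma bilin0r x : S x 0 = 0.
Proof.
have := (proj2 bilinS) 1 x 0 0; rewrite !scale1r addr0.
by move/(congr1 (fun v => v - S x 0)); rewrite subrr addrK.
Qed.

Lemma bilin_suml I (r : seq I) (P : pred I) (f : I -> 'cV[R]_m) (a : I -> R) y :
  S (\sum_(i <- r | P i) a i *: f i) y = \sum_(i <- r | P i) a i *: S (f i) y.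
Proof.
elim/big_rec2: _ => [|i u v _ <-]; first exact: bilin0l.
by rewrite (proj1 bilinS).
Qed.

Lemma bilin_sumr I (r : seq I) (P : pred I) (f : I -> 'cV[R]_n) (a : I -> R) x :
  S x (\sum_(i <- r | P i) a i *: f i) = \sum_(i <- r | P i) a i *: S x (f i).
Proof.
elim/big_rec2: _ => [|i u v _ <-]; first exact: bilin0r.
by rewrite (proj2 bilinS).
Qed.

Lemma colv_sum_delta {p} (x : 'cV[R]_p) : x = \sum_(i < p) x i 0 *: delta_mx i 0.
Proof.
rewrite {1}(matrix_sum_delta x); apply: eq_bigr => i _.
by rewrite big_ord1.
Qed.

Lemma liftS_outer x y : liftS S (x *m y^T) = S x y.
Proof.
apply/matrixP => j j0; rewrite (ord1 j0) mxE.
rewrite [in RHS](colv_sum_delta x) bilin_suml [in RHS](colv_sum_delta y).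
under [in RHS]eq_bigr => i _ do rewrite bilin_sumr.
rewrite summxE /mxtrace.
under eq_bigr => k _ do rewrite mxE.
rewrite exchange_big /=; apply: eq_bigr => i _.
rewrite mxE summxE big_distrr /=; apply: eq_bigr => k _.
rewrite !mxE big_ord1 !mxE.
by rewrite mulrC -mulrA [_ * S _ _ _ _]mulrC.
Qed.

End Bilinear.

Lemma mxrank_outer_le1 (R : fieldType) (m n : nat) (x : 'cV[R]_m) (y : 'cV[R]_n) :
  (\rank (x *m y^T) <= 1)%N.
Proof. exact: leq_trans (mxrankM_maxr _ _) (rank_leq_row _). Qed.

Section RankRelaxation.
Variables (R : realType) (m n q : nat) (S : 'cV[R]_m -> 'cV[R]_n -> 'cV[R]_q).
Variables (K : 'cV[R]_m -> 'cV[R]_n -> Prop) (K' : 'M[R]_(m, n) -> Prop).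
Variable z : 'cV[R]_q.
Hypothesis bilinS : bilinear_map S.
Hypothesis K'_rank1 :
  forall W : 'M[R]_(m, n), (K' W /\ (\rank W <= 1)%N) <-> lift_set K W.

Local Notation L := (lift_set (P_sol S K z)).

Definition zero_strict_subset (A : 'M[R]_(m, n) -> Prop) : Prop :=
  A 0 /\ exists W, A W /\ W <> 0.

Lemma lift_sol_Q_feas {W} : L W -> Q_feas S K' z W.
Proof.
move=> [x [y [[Sxy Kxy] ->]]]; split; first by rewrite liftS_outer.
by have [] := proj2 (K'_rank1 (x *m y^T)) (ex_intro _ x (ex_intro _ y (conj Kxy erefl))).
Qed.

Lemma lift_sol_rank_le1 {W} : L W -> (\rank W <= 1)%N.
Proof. by move=> [x [y [_ ->]]]; apply: mxrank_outer_le1. Qed.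

Lemma Q_feas_rank_le1_lift_sol {W} :
  Q_feas S K' z W -> (\rank W <= 1)%N -> L W.
Proof.
move=> [SW K'W] rW; have [x [y [Kxy eW]]] := proj1 (K'_rank1 W) (conj K'W rW).
by exists x, y; split=> //; split=> //; rewrite -SW eW liftS_outer.
Qed.

Hypothesis P_feasible : exists x y, P_sol S K z x y.

Lemma exists_lift_sol : exists W, L W.
Proof.
have [x [y sol]] := P_feasible.
by exists (x *m y^T), x, y.
Qed.

Lemma Q_opt_rank_le1 W : Q_opt S K' z W -> (\rank W <= 1)%N.
Proof.
move=> [_ minW]; have [W0 LW0] := exists_lift_sol.
exact: leq_trans (minW _ (lift_sol_Q_feas LW0)) (lift_sol_rank_le1 LW0).
Qed.

Lemma Q_opt_lift_sol W : Q_opt S K' z W -> L W.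
Proof.
move=> optW; apply: Q_feas_rank_le1_lift_sol (proj1 optW) _.
exact: Q_opt_rank_le1.
Qed.

Lemma Q_opt_eq_lift_sol_not_zero_strict :
  (forall W, Q_opt S K' z W <-> L W) -> ~ zero_strict_subset L.
Proof.
move=> optE [L0 [W [LW nzW]]].
have [_ minW] := proj2 (optE W) LW.
have := minW 0 (lift_sol_Q_feas L0); rewrite mxrank0 leqn0 mxrank_eq0.
by move/eqP.
Qed.

Lemma not_zero_strict_lift_sol_Q_opt :
  ~ zero_strict_subset L -> forall W, L W -> Q_opt S K' z W.
Proof.
move=> no0 W LW; split; first exact: lift_sol_Q_feas.
move=> W' feasW'; have [->|nzW] := eqVneq W 0; first by rewrite mxrank0.
apply: leq_trans (lift_sol_rank_le1 LW) _; rewrite lt0n mxrank_eq0.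
apply/eqP => eW'; apply: no0; split; last by exists W; split=> //; apply/eqP.
by rewrite -eW'; apply: Q_feas_rank_le1_lift_sol; rewrite // eW' mxrank0.
Qed.

End RankRelaxation.

Theorem theorem1 (R : realType) (m n q : nat)
  (S : 'cV[R]_m -> 'cV[R]_n -> 'cV[R]_q)
  (K : 'cV[R]_m -> 'cV[R]_n -> Prop) (K' : 'M[R]_(m, n) -> Prop)
  (z : 'cV[R]_q) :
  bilinear_map S ->
  (forall W : 'M[R]_(m, n), (K' W /\ (\rank W <= 1)%N) <-> lift_set K W) ->
  (exists x y, P_sol S K z x y) ->
  ((exists W, Q_feas S K' z W) /\
   (forall W, Q_opt S K' z W -> (\rank W <= 1)%N)) /\
  (forall W, Q_opt S K' z W -> lift_set (P_sol S K z) W) /\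
  ((forall W, Q_opt S K' z W <-> lift_set (P_sol S K z) W) <->
   ~ (lift_set (P_sol S K z) 0 /\
      exists W, lift_set (P_sol S K z) W /\ W <> 0)).
Proof.
move=> bilinS K'_rank1 P_feasible.
split; [split|split].
- have [W LW] := @exists_lift_sol _ _ _ _ S K z P_feasible.
  by exists W; apply: lift_sol_Q_feas LW.
- exact: Q_opt_rank_le1.
- exact: Q_opt_lift_sol.
- split; first exact: Q_opt_eq_lift_sol_not_zero_strict.
  move=> no0 W; split; first exact: Q_opt_lift_sol.
  exact: not_zero_strict_lift_sol_Q_opt.
Qed.
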